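(* Let $t\ge2$ be an integer and let $p\in\mathcal{P}_1\cup\mathcal{P}_2\cup\mathcal{P}_3\cup\mathcal{P}_4$. Then for every integer $m$ with $\chi_t(mp)\ne0$, $$\chi_t(mp)=\begin{cases}\chi_t(m),& p\in\mathcal{P}_1\cup\mathcal{P}_2,\\ -\chi_t(m),& p\in\mathcal{P}_3\cup\mathcal{P}_4.\end{cases}$$
   Context: $\chi_t$ is the function of period $3\cdot2^{t+1}$ with $\chi_t(n)=1$ if $n\equiv 2^{t+1}-3$ or $3+2^{t+2}$, $\chi_t(n)=-1$ if $n\equiv 2^{t+1}+3$ or $2^{t+2}-3\pmod{3\cdot2^{t+1}}$, and $0$ otherwise. $\mathcal{P}_1$ is the set of primes $p\equiv1\pmod{3\cdot2^{t+1}}$; $\mathcal{P}_2$ the set of primes $p\equiv3\cdot2^{t+1}-1\pmod{3\cdot2^{t+1}}$; $\mathcal{P}_3$ the set of primes $p\equiv r_1(t)\pmod{3\cdot2^{t+1}}$ where $r_1(t)=2^{t+1}-1$ if $t$ is even and $2^{t+1}+1$ if $t$ is odd; $\mathcal{P}_4$ the set of primes $p\equiv r_2(t)\pmod{3\cdot2^{t+1}}$ where $r_2(t)=2^{t+2}+1$ if $t$ is even and $2^{t+2}-1$ if $t$ is odd. *)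

From Stdlib Require Import Bool ZArith Znumtheory.
Open Scope Z_scope.
Open Scope bool_scope.

Definition modt (t : nat) : Z := 3 * 2 ^ (Z.of_nat t + 1).

Definition chi (t : nat) (n : Z) : Z :=
  let M := modt t in
  let r := n mod M in
  let a := 2 ^ (Z.of_nat t + 1) in
  let b := 2 ^ (Z.of_nat t + 2) in
  if Z.eqb r ((a - 3) mod M) || Z.eqb r ((3 + b) mod M) then 1
  else if Z.eqb r ((a + 3) mod M) || Z.eqb r ((b - 3) mod M) then -1
  else 0.

Definition r1 (t : nat) : Z :=
  if Nat.even t then 2 ^ (Z.of_nat t + 1) - 1 else 2 ^ (Z.of_nat t + 1) + 1.
Definition r2 (t : nat) : Z :=
  if Nat.even t then 2 ^ (Z.of_nat t + 2) + 1 else 2 ^ (Z.of_nat t + 2) - 1.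

Definition inP1 (t : nat) (p : Z) : Prop := prime p /\ p mod modt t = 1 mod modt t.
Definition inP2 (t : nat) (p : Z) : Prop := prime p /\ p mod modt t = (modt t - 1) mod modt t.
Definition inP3 (t : nat) (p : Z) : Prop := prime p /\ p mod modt t = r1 t mod modt t.
Definition inP4 (t : nat) (p : Z) : Prop := prime p /\ p mod modt t = r2 t mod modt t.

From Stdlib Require Import ZArith Znumtheory Lia.
Open Scope Z_scope.

(* Put a = 2^(t+1).  Since 3 and a are coprime, the four residues mod 3a on which chi_t
   is non-zero are exactly the lifts of {±1 mod 3} x {±3 mod a}, and one checks
   chi_t(n) = -(a/3) (n/3) s(n), where (n/3) is the Legendre symbol mod 3 and s(n) = ±1
   according as n = ±3 (mod a), s(n) = 0 otherwise.  Every p in P_1 u ... u P_4 is = ±1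
   both mod 3 and mod a, so multiplying n by p multiplies (n/3) by (p/3) and s(n) by the
   sign of p mod a; the product of these two signs is +1 on P_1 u P_2 and -1 on
   P_3 u P_4. *)

Definition legendre3 (n : Z) : Z :=
  if n mod 3 =? 1 then 1 else if n mod 3 =? 2 then -1 else 0.

Lemma legendre3_spec (n : Z) :
  n mod 3 = 0 /\ legendre3 n = 0 \/ n mod 3 = 1 /\ legendre3 n = 1 \/
  n mod 3 = 2 /\ legendre3 n = -1.
Proof.
  unfold legendre3; pose proof (Z.mod_pos_bound n 3).
  destruct (Z.eqb_spec (n mod 3) 1), (Z.eqb_spec (n mod 3) 2); lia.
Qed.

Lemma legendre3_mod (x y : Z) : x mod 3 = y mod 3 -> legendre3 x = legendre3 y.
Proof. intros Hxy; unfold legendre3; rewrite Hxy; reflexivity. Qed.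

Lemma legendre3_mul (m n : Z) : legendre3 (m * n) = legendre3 m * legendre3 n.
Proof.
  unfold legendre3; rewrite Z.mul_mod by lia.
  assert (Hm : m mod 3 = 0 \/ m mod 3 = 1 \/ m mod 3 = 2)
    by (pose proof (Z.mod_pos_bound m 3); lia).
  assert (Hn : n mod 3 = 0 \/ n mod 3 = 1 \/ n mod 3 = 2)
    by (pose proof (Z.mod_pos_bound n 3); lia).
  destruct Hm as [-> | [-> | ->]], Hn as [-> | [-> | ->]]; reflexivity.
Qed.

Lemma legendre3_pm1 (e : Z) : e = 1 \/ e = -1 -> legendre3 e = e.
Proof. intros [-> | ->]; reflexivity. Qed.

Section ResiduesModThreeA.

Variable a : Z.
Hypothesis a_gt6 : 6 < a.

Definition sign_pm3 (n : Z) : Z :=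
  if n mod a =? 3 then 1 else if n mod a =? a - 3 then -1 else 0.

Definition chi_gen (n : Z) : Z :=
  let r := n mod (3 * a) in
  if (r =? a - 3) || (r =? 2 * a + 3) then 1
  else if (r =? a + 3) || (r =? 2 * a - 3) then -1
  else 0.

Lemma sign_pm3_spec (n : Z) :
  n mod a = 3 /\ sign_pm3 n = 1 \/ n mod a = a - 3 /\ sign_pm3 n = -1 \/
  ~ (n mod a = 3 \/ n mod a = a - 3) /\ sign_pm3 n = 0.
Proof.
  unfold sign_pm3.
  destruct (Z.eqb_spec (n mod a) 3), (Z.eqb_spec (n mod a) (a - 3)); lia.
Qed.

Lemma sign_pm3_mod (x y : Z) : x mod a = y mod a -> sign_pm3 x = sign_pm3 y.
Proof. intros Hxy; unfold sign_pm3; rewrite Hxy; reflexivity. Qed.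

Lemma sign_pm3_opp (n : Z) : sign_pm3 (- n) = - sign_pm3 n.
Proof.
  unfold sign_pm3; pose proof (Z.mod_pos_bound n a ltac:(lia)).
  destruct (Z.eq_dec (n mod a) 0) as [Hn0 | Hn0].
  - rewrite Z_mod_zero_opp_full, Hn0 by exact Hn0.
    destruct (Z.eqb_spec 0 (a - 3)); [lia | reflexivity].
  - rewrite Z_mod_nz_opp_full by exact Hn0.
    destruct (Z.eqb_spec (n mod a) 3), (Z.eqb_spec (n mod a) (a - 3)),
      (Z.eqb_spec (a - n mod a) 3), (Z.eqb_spec (a - n mod a) (a - 3)); lia.
Qed.

Lemma sign_pm3_mul (n q d : Z) :
  q mod a = d mod a -> d = 1 \/ d = -1 -> sign_pm3 (n * q) = d * sign_pm3 n.
Proof.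
  intros Hq Hd.
  rewrite (sign_pm3_mod (n * q) (n * d))
    by now rewrite Z.mul_mod, Hq, <- Z.mul_mod by lia.
  destruct Hd as [-> | ->].
  - rewrite Z.mul_1_r; ring.
  - replace (n * -1) with (- n) by ring; rewrite sign_pm3_opp; ring.
Qed.

Lemma chi_gen_spec (n : Z) :
  let r := n mod (3 * a) in
  (r = a - 3 \/ r = 2 * a + 3) /\ chi_gen n = 1 \/
  (r = a + 3 \/ r = 2 * a - 3) /\ chi_gen n = -1 \/
  ~ (r = a - 3 \/ r = 2 * a + 3 \/ r = a + 3 \/ r = 2 * a - 3) /\ chi_gen n = 0.
Proof.
  intros r; unfold chi_gen; fold r; clearbody r.
  destruct (Z.eqb_spec r (a - 3)), (Z.eqb_spec r (2 * a + 3)),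
    (Z.eqb_spec r (a + 3)), (Z.eqb_spec r (2 * a - 3)); cbn [orb]; lia.
Qed.

Hypothesis a_coprime3 : a mod 3 <> 0.

Lemma chi_gen_factor (n : Z) :
  chi_gen n = - legendre3 a * legendre3 n * sign_pm3 n.
Proof.
  pose proof (chi_gen_spec n) as Hchi; cbv zeta in Hchi.
  assert (Hn3 : n mod 3 = (n mod (3 * a)) mod 3)
    by (apply Zmod_div_mod; [lia | lia | exists a; ring]).
  assert (Hna : n mod a = (n mod (3 * a)) mod a)
    by (apply Zmod_div_mod; [lia | lia | exists 3; ring]).
  pose proof (legendre3_spec a) as Ha; pose proof (legendre3_spec n) as Hj;
    pose proof (sign_pm3_spec n) as Hs.
  rewrite Hn3 in Hj; rewrite Hna in Hs.
  pose proof (Z.mod_pos_bound n (3 * a) ltac:(lia)).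
  remember (n mod (3 * a)) as r eqn:Hr; clear Hr Hn3 Hna.
  (* Writing r = a j + s with j in {0, 1, 2} makes every remaining constraint linear. *)
  pose proof (Z.div_mod r a ltac:(lia)); pose proof (Z.mod_pos_bound r a ltac:(lia)).
  assert (Hj3 : 0 <= r / a < 3)
    by (split; [apply Z.div_pos | apply Z.div_lt_upper_bound]; lia).
  remember (r mod a) as s; remember (r / a) as j.
  assert (j = 0 \/ j = 1 \/ j = 2) as [-> | [-> | ->]] by lia;
  destruct Hchi as [[? ->] | [[? ->] | [? ->]]],
    Ha as [[? ->] | [[? ->] | [? ->]]], Hj as [[? ->] | [[? ->] | [? ->]]],
    Hs as [[? ->] | [[? ->] | [? ->]]];
  Z.to_euclidean_division_equations; lia.
Qed.

Lemma chi_gen_mul (m q e d : Z) :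
  q mod 3 = e mod 3 -> q mod a = d mod a -> e = 1 \/ e = -1 -> d = 1 \/ d = -1 ->
  chi_gen (m * q) = e * d * chi_gen m.
Proof.
  intros Hq3 Hqa He Hd.
  rewrite !chi_gen_factor, legendre3_mul, (sign_pm3_mul m q d) by assumption.
  rewrite (legendre3_mod q e), (legendre3_pm1 e) by assumption; ring.
Qed.

End ResiduesModThreeA.

Lemma pow2_succ_mod3 (n : nat) :
  2 ^ (Z.of_nat n + 1) mod 3 = if Nat.even n then 2 else 1.
Proof.
  induction n as [| n IH]; [reflexivity |].
  rewrite Nat.even_succ, <- Nat.negb_even, Nat2Z.inj_succ, Z.add_succ_l,
    Z.pow_succ_r, <- Z.mul_mod_idemp_r, IH by lia.
  destruct (Nat.even n); reflexivity.
Qed.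

Section Chi.

Variable t : nat.
Hypothesis t_ge2 : (2 <= t)%nat.

Local Notation a := (2 ^ (Z.of_nat t + 1)).

Lemma pow2_gt6 : 6 < a.
Proof.
  apply (Z.lt_le_trans _ (2 ^ 3)); [reflexivity |].
  apply Z.pow_le_mono_r; lia.
Qed.

Lemma pow2_succ : 2 ^ (Z.of_nat t + 2) = 2 * a.
Proof. rewrite <- Z.pow_succ_r by lia; f_equal; lia. Qed.

Lemma chi_eq_chi_gen (n : Z) : chi t n = chi_gen a n.
Proof.
  pose proof pow2_gt6.
  unfold chi, chi_gen, modt; rewrite pow2_succ.
  rewrite (Z.mod_small (a - 3)), (Z.mod_small (3 + 2 * a)), (Z.mod_small (a + 3)),
    (Z.mod_small (2 * a - 3)) by lia.
  rewrite (Z.add_comm 3 (2 * a)); reflexivity.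
Qed.

Lemma chi_mul_residue (m p d k e : Z) :
  p mod modt t = (d + k * a) mod modt t -> (d + k * a) mod 3 = e mod 3 ->
  d = 1 \/ d = -1 -> e = 1 \/ e = -1 -> chi t (m * p) = e * d * chi t m.
Proof.
  intros Hp Hq3 Hd He; pose proof pow2_gt6.
  assert (Ha3 : a mod 3 <> 0)
    by (rewrite pow2_succ_mod3; destruct (Nat.even t); discriminate).
  assert (HM : 0 < modt t) by (unfold modt; lia).
  assert (Hp3 : p mod 3 = (d + k * a) mod 3).
  { rewrite (Zmod_div_mod 3 (modt t) p), Hp, <- Zmod_div_mod by
      (lia || (unfold modt; exists a; ring)); reflexivity. }
  assert (Hpa : p mod a = (d + k * a) mod a).
  { rewrite (Zmod_div_mod a (modt t) p), Hp, <- Zmod_div_mod by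
      (lia || (unfold modt; exists 3; ring)); reflexivity. }
  rewrite !chi_eq_chi_gen; apply chi_gen_mul; try assumption.
  - congruence.
  - rewrite Hpa, Z.mod_add by lia; reflexivity.
Qed.

Local Ltac chi_mul_by d k e Hp :=
  rewrite (chi_mul_residue _ _ d k e);
  [ ring | rewrite Hp; unfold modt; f_equal; ring
  | Z.to_euclidean_division_equations; lia | lia | lia ].

Lemma chi_mul_P1 (m p : Z) : inP1 t p -> chi t (m * p) = chi t m.
Proof. intros [_ Hp]; chi_mul_by 1 0 1 Hp. Qed.

Lemma chi_mul_P2 (m p : Z) : inP2 t p -> chi t (m * p) = chi t m.
Proof. intros [_ Hp]; chi_mul_by (-1) 3 (-1) Hp. Qed.

Lemma chi_mul_P3 (m p : Z) : inP3 t p -> chi t (m * p) = - chi t m.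
Proof.
  intros [_ Hp]; pose proof (pow2_succ_mod3 t) as Ha3; unfold r1 in Hp.
  destruct (Nat.even t); [chi_mul_by (-1) 1 1 Hp | chi_mul_by 1 1 (-1) Hp].
Qed.

Lemma chi_mul_P4 (m p : Z) : inP4 t p -> chi t (m * p) = - chi t m.
Proof.
  intros [_ Hp]; pose proof (pow2_succ_mod3 t) as Ha3; unfold r2 in Hp.
  rewrite pow2_succ in Hp.
  destruct (Nat.even t); [chi_mul_by 1 2 (-1) Hp | chi_mul_by (-1) 2 1 Hp].
Qed.

End Chi.

Theorem lemma4p6 (t : nat) (p : Z) :
  (2 <= t)%nat ->
  (inP1 t p \/ inP2 t p \/ inP3 t p \/ inP4 t p) ->
  forall m : Z, chi t (m * p) <> 0 ->
    ((inP1 t p \/ inP2 t p) -> chi t (m * p) = chi t m) /\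
    ((inP3 t p \/ inP4 t p) -> chi t (m * p) = - chi t m).
Proof.
  (* The identities hold for every m. *)
  intros Ht _ m _; split.
  - intros [Hp | Hp]; [exact (chi_mul_P1 t Ht m p Hp) | exact (chi_mul_P2 t Ht m p Hp)].
  - intros [Hp | Hp]; [exact (chi_mul_P3 t Ht m p Hp) | exact (chi_mul_P4 t Ht m p Hp)].
Qed.
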